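(* Let $N$ be a positive integer, $a,b,c\in\mathbb{R}$ with $a\neq0$, $W=[w_{ij}]\in\mathbb{R}^{N\times N}$ with $w_{ii}=0$ for all $i$, $\Delta=\mathrm{diag}(\delta_1,\dots,\delta_N)$ with $\delta_i\in\{0,1\}$, and $h>0$. Put $\Phi_s=e^{ah}I_N+\frac{c}{a}(e^{ah}-1)W$ and $\Psi_s=\frac{b}{a}(e^{ah}-1)\Delta$, and assume $0$ is not an eigenvalue of $\Phi_s$. Then the discrete-time system $X(k+1)=\Phi_sX(k)+\Psi_sU(k)$ is controllable if and only if the continuous-time system $\dot X(t)=(aI_N+cW)X(t)+b\Delta U(t)$ is controllable.
   Context: The continuous-time system is controllable in the usual sense (equivalently $\mathrm{rank}[sI_N-(aI_N+cW),\ b\Delta]=N$ for all $s\in\mathbb{C}$). The discrete-time system is called controllable if every initial state can be steered to the origin in finitely many steps. *)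

From mathcomp Require Import all_boot all_algebra.
From mathcomp Require Import complex.
From mathcomp Require Import reals sequences exp.
Set Implicit Arguments. Unset Strict Implicit. Unset Printing Implicit Defensive.
Import GRing.Theory Num.Theory.
Local Open Scope ring_scope.

Fixpoint dtraj (R : pzRingType) (N : nat) (A B : 'M[R]_N) (x0 : 'cV[R]_N)
    (u : nat -> 'cV[R]_N) (k : nat) : 'cV[R]_N :=
  match k with
  | 0 => x0
  | k'.+1 => A *m dtraj A B x0 u k' + B *m u k'
  end.

Definition dt_controllable (R : pzRingType) (N : nat) (A B : 'M[R]_N) : Prop :=
  forall x0 : 'cV[R]_N, exists (k : nat) (u : nat -> 'cV[R]_N),
    dtraj A B x0 u k = 0.

Definition cmx (R : rcfType) (m n : nat) (M : 'M[R]_(m, n)) : 'M[R[i]]_(m, n) :=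
  map_mx (fun x => Complex x 0) M.

(* Continuous-time controllability of dX/dt = A X + B U, in the form given in
   the paper's context: rank [sI_N - A, B] = N for all complex s. *)
Definition ct_controllable (R : rcfType) (N : nat) (A B : 'M[R]_N) : Prop :=
  forall s : R[i], \rank (row_mx (s%:M - cmx A) (cmx B)) = N.

Definition Delta_mx (R : pzRingType) (N : nat) (delta : 'I_N -> bool) : 'M[R]_N :=
  diag_mx (\row_i (delta i)%:R).

Definition Phi_s (R : realType) (N : nat) (a c h : R) (W : 'M[R]_N) : 'M[R]_N :=
  (expR (a * h))%:M + (c / a * (expR (a * h) - 1)) *: W.

Definition Psi_s (R : realType) (N : nat) (a b h : R) (delta : 'I_N -> bool)
  : 'M[R]_N :=
  (b / a * (expR (a * h) - 1)) *: Delta_mx R delta.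

From mathcomp Require Import all_boot all_algebra.
From mathcomp Require Import complex.
From mathcomp Require Import reals sequences exp.
Set Implicit Arguments. Unset Strict Implicit. Unset Printing Implicit Defensive.
Import GRing.Theory Num.Theory.
Local Open Scope ring_scope.

(* For both systems, controllability of a pair (A, B) means that no nonzero
   row vector v satisfies v A^k B = 0 for all k.  For the continuous system
   this is the Hautus test (an invariant subspace of A inside ker B contains a
   left eigenvector); for the discrete one, Cayley-Hamilton makes every state
   reachable in N steps, and conversely steering to 0 forces v A^K = 0 for
   large K, so v = 0 because Phi_s is invertible.  Finally Phi_s and a I + c W
   are affine in W with slopes vanishing together, Psi_s and b Delta are
   multiples of Delta vanishing together, and such changes do not alter the
   set of annihilating vectors v. *)

Definition krylov_ann (F : fieldType) n p m (A : 'M[F]_n) (B : 'M[F]_(n, p))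
    (v : 'M[F]_(m, n)) : Prop :=
  forall k, v *m A ^+ k *m B = 0.

Definition controllable (F : fieldType) n p (A : 'M[F]_n) (B : 'M[F]_(n, p))
    : Prop :=
  forall v : 'rV_n, krylov_ann A B v -> v = 0.

Lemma eq_controllable (F : fieldType) n p (A A' : 'M[F]_n) (B B' : 'M_(n, p)) :
  (forall v : 'rV_n, krylov_ann A B v <-> krylov_ann A' B' v) ->
  controllable A B <-> controllable A' B'.
Proof. by move=> eqAB; split=> ctrl v /eqAB; apply: ctrl. Qed.

Section KrylovAnnihilator.

Variables (F : fieldType) (n p m : nat) (A : 'M[F]_n) (B : 'M[F]_(n, p)).
Implicit Types v w : 'M[F]_(m, n).

Lemma krylov_annD v w : krylov_ann A B v -> krylov_ann A B w ->
  krylov_ann A B (v + w).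
Proof. by move=> vAB wAB k; rewrite !mulmxDl vAB wAB addr0. Qed.

Lemma krylov_annZ c v : krylov_ann A B v -> krylov_ann A B (c *: v).
Proof. by move=> vAB k; rewrite -!scalemxAl vAB scaler0. Qed.

Lemma krylov_ann_mulmx v : krylov_ann A B v -> krylov_ann A B (v *m A).
Proof. by move=> vAB k; have := vAB k.+1; rewrite exprS -mulmxE !mulmxA. Qed.

Lemma krylov_ann_affine c q v :
  krylov_ann A B v -> krylov_ann (c%:M + q *: A) B v.
Proof.
move=> vAB; set A' := c%:M + q *: A.
have mulA' w : krylov_ann A B w -> krylov_ann A B (w *m A').
  move=> wAB; rewrite mulmxDr mul_mx_scalar -scalemxAr.
  by apply: krylov_annD; apply: krylov_annZ; last apply: krylov_ann_mulmx.
have powA' k : krylov_ann A B (v *m A' ^+ k).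
  elim: k => [|k IHk]; first by rewrite expr0 mulmx1.
  by rewrite exprSr -mulmxE mulmxA; apply: mulA'.
by move=> k; have := powA' k 0%N; rewrite expr0 mulmx1.
Qed.

Lemma krylov_ann_scale s v :
  s != 0 -> krylov_ann A (s *: B) v <-> krylov_ann A B v.
Proof.
move=> s_neq0; split=> vAB k; last by rewrite -scalemxAr vAB scaler0.
by apply/eqP; move/eqP: (vAB k); rewrite -scalemxAr scaler_eq0 (negPf s_neq0).
Qed.

End KrylovAnnihilator.

Lemma krylov_ann_affineE (F : fieldType) n p m (W : 'M[F]_n) (B : 'M_(n, p))
    (v : 'M_(m, n)) c q c' q' :
  (q == 0) = (q' == 0) ->
  krylov_ann (c%:M + q *: W) B v <-> krylov_ann (c'%:M + q' *: W) B v.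
Proof.
wlog suff imp : c q c' q' / (q == 0) = (q' == 0) ->
    krylov_ann (c'%:M + q' *: W) B v -> krylov_ann (c%:M + q *: W) B v.
  by move=> qq'; split; apply: imp.
move=> qq'; have [q'0|q'_neq0] := eqVneq q' 0.
  have /eqP q0 : q == 0 by rewrite qq' q'0.
  have -> : c%:M + q *: W = c%:M + 0 *: (c'%:M + q' *: W).
    by rewrite q0 !scale0r.
  exact: krylov_ann_affine.
have -> : c%:M + q *: W =
    (c - q / q' * c')%:M + (q / q') *: (c'%:M + q' *: W).
  by rewrite scalerDr scale_scalar_mx scalerA divfK // raddfB addrA subrK.
exact: krylov_ann_affine.
Qed.

Lemma krylov_ann_scaleE (F : fieldType) n p m (A : 'M[F]_n) (B : 'M_(n, p))
    (v : 'M_(m, n)) s s' :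
  (s == 0) = (s' == 0) -> krylov_ann A (s *: B) v <-> krylov_ann A (s' *: B) v.
Proof.
have [->|s_neq0] := eqVneq s 0; first by move=> /esym/eqP->.
move=> /esym/negbT s'_neq0.
by rewrite krylov_ann_scale // krylov_ann_scale.
Qed.

Section CayleyHamilton.

Variables (F : fieldType) (n p : nat) (A : 'M[F]_n.+1) (B : 'M[F]_(n.+1, p)).

Lemma horner_mx_sum (P : {poly F}) :
  horner_mx A P = \sum_(i < size P) P`_i *: A ^+ i.
Proof.
rewrite -{1}(coefK P) poly_def rmorph_sum /=; apply: eq_bigr => i _.
by rewrite linearZ /= rmorphXn /= horner_mx_X.
Qed.

Lemma krylov_ann_lt_dim m (v : 'M_(m, n.+1)) :
  (forall k, (k < n.+1)%N -> v *m A ^+ k *m B = 0) -> krylov_ann A B v.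
Proof.
move=> vAB k.
have -> : A ^+ k = horner_mx A ('X^k %% char_poly A).
  rewrite -[A in LHS]horner_mx_X -rmorphXn {1}(divp_eq 'X^k (char_poly A)).
  by rewrite rmorphD rmorphM /= Cayley_Hamilton mulr0 add0r.
rewrite horner_mx_sum mulmx_sumr mulmx_suml big1 // => i _.
rewrite -scalemxAr -scalemxAl vAB ?scaler0 //.
apply: leq_trans (ltn_ord i) _; rewrite -ltnS -(size_char_poly A) ltn_modp.
exact/monic_neq0/char_poly_monic.
Qed.

Definition krylov_kernel : 'M[F]_n.+1 :=
  (\bigcap_(k < n.+1) kermx (A ^+ k *m B))%MS.

Lemma sub_krylov_kernel m (v : 'M_(m, n.+1)) :
  (v <= krylov_kernel)%MS <-> krylov_ann A B v.
Proof.
split=> [/sub_bigcapmxP vK | vAB].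
  apply: krylov_ann_lt_dim => k k_lt; rewrite -mulmxA.
  exact/sub_kermxP/(vK (Ordinal k_lt)).
by apply/sub_bigcapmxP => k _; apply/sub_kermxP; rewrite mulmxA vAB.
Qed.

Lemma krylov_kernel_stable : stablemx krylov_kernel A.
Proof. by apply/sub_krylov_kernel/krylov_ann_mulmx/sub_krylov_kernel. Qed.

End CayleyHamilton.

Lemma stablemx_eigenvector (F : closedFieldType) n (V f : 'M[F]_n) :
  stablemx V f -> V != 0 ->
  exists a (w : 'rV_n), [/\ w != 0, (w <= V)%MS & w *m f = a *: w].
Proof.
move=> Vf V_neq0; set U := row_base V.
have [a] : exists a, root (char_poly (conjmx U f)) a.
  by apply/closed_rootP; rewrite size_char_poly eqSS mxrank_eq0.
rewrite -eigenvalue_root_char => /eigenvalueP [x /eigenspaceP xU x_neq0].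
have Uf : stablemx U f by rewrite stablemx_row_base.
move: xU; rewrite sub_eigenspace_conjmx ?row_base_free // => /eigenspaceP wf.
exists a, (x *m U); split=> //; first by rewrite mulmx_free_eq0 ?row_base_free.
by rewrite (submx_trans (submxMl _ _)) ?eq_row_base.
Qed.

Lemma krylov_ann_eigenvector (F : fieldType) n p (A : 'M[F]_n) (B : 'M_(n, p))
    (v : 'rV_n) s :
  v *m A = s *: v -> v *m B = 0 -> krylov_ann A B v.
Proof.
move=> vA vB k; suff -> : v *m A ^+ k = s ^+ k *: v.
  by rewrite -scalemxAl vB scaler0.
elim: k => [|k IHk]; first by rewrite expr0 mulmx1 scale1r.
by rewrite exprSr mulmxA IHk -scalemxAl vA scalerA -exprSr.
Qed.

Lemma hautus (F : closedFieldType) n p (A : 'M[F]_n.+1) (B : 'M_(n.+1, p)) :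
  controllable A B <-> forall s, row_free (row_mx (s%:M - A) B).
Proof.
split=> [ctrl s | rfAB v vAB].
  apply: inj_row_free => v; rewrite mul_mx_row => /eqP.
  rewrite row_mx_eq0 mulmxBr mul_mx_scalar subr_eq0 => /andP [/eqP vA /eqP vB].
  exact/ctrl/(krylov_ann_eigenvector (esym vA)).
apply/eqP/negPn/negP => v_neq0.
have /(stablemx_eigenvector (krylov_kernel_stable A B)) [a [w [w_neq0 wK wA]]]
    : krylov_kernel A B != 0.
  by apply: contraNneq v_neq0 => K0; rewrite -submx0 -K0 sub_krylov_kernel.
have wB : w *m B = 0.
  by have := (sub_krylov_kernel A B w).1 wK 0%N; rewrite mulmx1.
move/negP: w_neq0; apply; rewrite -(mulmx_free_eq0 _ (rfAB a)).
by rewrite mul_mx_row wB mulmxBr mul_mx_scalar wA subrr row_mx0.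
Qed.

Section RealToComplex.

Variable R : rcfType.

Lemma cmxE m n (M : 'M[R]_(m, n)) : cmx M = map_mx (real_complex R) M.
Proof. by []. Qed.

Lemma cmx_ReIm m n (M : 'M[R[i]]_(m, n)) :
  M = cmx (map_mx (@complex.Re R) M) + 'i *: cmx (map_mx (@complex.Im R) M).
Proof.
apply/matrixP => i j; rewrite !mxE.
by case: (M i j) => x y; rewrite [LHS]complexE.
Qed.

Lemma cmx_ReIm_eq0 m n (X Y : 'M[R]_(m, n)) :
  cmx X + 'i *: cmx Y = 0 -> X = 0 /\ Y = 0.
Proof.
move=> XY0; suff XY0ij i j : X i j = 0 /\ Y i j = 0.
  by split; apply/matrixP => i j; rewrite mxE; case: (XY0ij i j).
move/matrixP/(_ i j)/eqP: XY0; rewrite !mxE /= eq_complex /=.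
rewrite !(mul0r, mul1r, mulr0, subr0, addr0, add0r).
by case/andP => /eqP -> /eqP ->.
Qed.

Lemma controllable_cmx n p (A : 'M[R]_n.+1) (B : 'M_(n.+1, p)) :
  controllable A B <-> controllable (cmx A) (cmx B).
Proof.
have cmxAB k m (v : 'M_(m, n.+1)) :
    cmx (v *m A ^+ k *m B) = cmx v *m cmx A ^+ k *m cmx B.
  by rewrite !cmxE !map_mxM rmorphXn.
split=> [ctrl v vAB | ctrl v vAB].
  set X := map_mx (@complex.Re R) v; set Y := map_mx (@complex.Im R) v.
  have XY k : X *m A ^+ k *m B = 0 /\ Y *m A ^+ k *m B = 0.
    apply: cmx_ReIm_eq0; rewrite !cmxAB !scalemxAl -!mulmxDl.
    by rewrite -(cmx_ReIm v) vAB.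
  have X0 : X = 0 by apply: ctrl => k; case: (XY k).
  have Y0 : Y = 0 by apply: ctrl => k; case: (XY k).
  by rewrite (cmx_ReIm v) -/X -/Y X0 Y0 !cmxE !map_mx0 scaler0 addr0.
apply/eqP; rewrite -(map_mx_eq0 (real_complex R)) -cmxE.
by apply/eqP/ctrl => k; rewrite -cmxAB vAB cmxE map_mx0.
Qed.

Lemma ct_controllableE n (A B : 'M[R]_n.+1) :
  ct_controllable A B <-> controllable A B.
Proof.
rewrite controllable_cmx hautus.
by split=> rkAB s; apply/eqP; apply: rkAB.
Qed.

End RealToComplex.

Section DiscreteTime.

Variables (F : fieldType) (n : nat) (A B : 'M[F]_n.+1).

Lemma dtrajE x0 u k :
  dtraj A B x0 u k = A ^+ k *m x0 + \sum_(i < k) A ^+ i *m B *m u (k - i.+1)%N.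
Proof.
have AX i : A *m A ^+ i = A ^+ i.+1 := esym (exprS A i).
elim: k => [|k IHk]; first by rewrite big_ord0 expr0 mul1mx addr0.
rewrite /= IHk big_ord_recl expr0 mul1mx subSS subn0 mulmxDr mulmxA AX.
rewrite -addrA; congr (_ + _); rewrite addrC mulmx_sumr; congr (_ + _).
by apply: eq_bigr => i _; rewrite subSS !mulmxA AX.
Qed.

Lemma krylov_ann_dtraj (v : 'rV_n.+1) x0 u k m :
  krylov_ann A B v -> dtraj A B x0 u k = 0 -> (k <= m)%N ->
  v *m A ^+ m *m x0 = 0.
Proof.
have AD i j : A ^+ i *m A ^+ j = A ^+ (i + j) := esym (exprD A i j).
move=> vAB traj0 /subnK <-; have := congr1 (mulmx (v *m A ^+ (m - k))) traj0.
rewrite mulmx0 dtrajE mulmxDr mulmx_sumr big1 ?addr0 => [|i _].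
  by rewrite mulmxA -(mulmxA v) AD.
by rewrite !mulmxA -(mulmxA v) AD vAB mul0mx.
Qed.

Lemma controllable_dt : controllable A B -> dt_controllable A B.
Proof.
move=> ctrl x0; pose d := n.+1.
pose S := (\sum_(i < d) (A ^+ i *m B)^T)%MS.
have S_full : row_full S.
  rewrite /row_full -mxrank_tr; apply: (inj_row_free (A := S^T)) => v vS.
  apply/ctrl/krylov_ann_lt_dim => k k_lt.
  have /submxP [D AkB] : ((A ^+ k *m B)^T <= S)%MS.
    exact: (sumsmx_sup (Ordinal k_lt)).
  by rewrite -mulmxA -[A ^+ k *m B]trmxK AkB trmx_mul mulmxA vS mul0mx.
have /sub_sumsmxP [w Aw] : ((- (A ^+ d *m x0))^T <= S)%MS by apply: submx_full.
exists d, (fun j => (w (inord (d - j.+1)))^T); rewrite dtrajE.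
suff -> : \sum_(i < d) A ^+ i *m B *m (w (inord (d - (d - i.+1).+1)))^T =
          - (A ^+ d *m x0) by rewrite addrN.
rewrite -[RHS]trmxK Aw raddf_sum; apply: eq_bigr => i _ /=.
by rewrite subnSK // subKn 1?ltnW // inord_val trmx_mul trmxK.
Qed.

Lemma dt_controllable_unit : A \in unitmx ->
  dt_controllable A B -> controllable A B.
Proof.
move=> A_unit dtc v vAB.
have /fin_all_exists [k vAk] (j : 'I_n.+1) : exists k, forall m, (k <= m)%N ->
    v *m A ^+ m *m delta_mx j (0 : 'I_1) = 0.
  have [k [u traj0]] := dtc (delta_mx j 0).
  by exists k => m; apply: krylov_ann_dtraj traj0.
set K := (\max_j k j)%N.
have vAK : v *m A ^+ K = 0.
  apply/rowP => j; move/matrixP/(_ 0 0): (vAk j K (leq_bigmax j)).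
  by rewrite -colE !mxE.
by rewrite -[v](mulmxK (unitrX K A_unit)) vAK mul0mx.
Qed.

Lemma dt_controllableE : A \in unitmx ->
  dt_controllable A B <-> controllable A B.
Proof.
by move=> A_unit; split; [apply: dt_controllable_unit | apply: controllable_dt].
Qed.

End DiscreteTime.

Lemma unitmx_not_eigenvalue0 (F : fieldType) n (A : 'M[F]_n) :
  ~~ eigenvalue A 0 -> A \in unitmx.
Proof.
move=> A0; rewrite -row_free_unit; apply: inj_row_free => v vA.
apply/eqP/negPn/negP => v_neq0; case/negP: A0.
by apply/eigenvalueP; exists v; rewrite // scale0r.
Qed.

Theorem corollary10 (R : realType) (N : nat) (a b c h : R) (W : 'M[R]_N)
    (delta : 'I_N -> bool) :
  (0 < N)%N -> a != 0 -> (forall i, W i i = 0) -> 0 < h ->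
  ~~ eigenvalue (Phi_s a c h W) 0 ->
  (dt_controllable (Phi_s a c h W) (Psi_s a b h delta) <->
   ct_controllable (a%:M + c *: W) (b *: Delta_mx R delta)).
Proof.
move=> N_gt0 a_neq0 _ h_gt0.
case: N N_gt0 W delta => [//|n] _ W delta Phi_eig0.
have eah1_neq0 : expR (a * h) - 1 != 0.
  rewrite subr_eq0 -expR0; apply: contraTneq isT => /expR_inj /eqP.
  by rewrite mulf_eq0 (negPf a_neq0) (negPf (lt0r_neq0 h_gt0)).
have coef_eq0 x : (x / a * (expR (a * h) - 1) == 0) = (x == 0).
  by rewrite !mulf_eq0 invr_eq0 (negPf a_neq0) (negPf eah1_neq0) !orbF.
rewrite dt_controllableE ?unitmx_not_eigenvalue0 // ct_controllableE.
apply: eq_controllable => v; rewrite /Phi_s /Psi_s.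
rewrite (krylov_ann_scaleE _ _ _ (coef_eq0 b)).
exact: (krylov_ann_affineE _ _ _ _ a (coef_eq0 c)).
Qed.
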